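(* Inside the quotient field $Q(\mathbb{Z}[q]^{\mathbb{N}})$ one has $$\mathbb{Z}[q]^{\mathbb{N}}\cap\mathbb{Z}[q,q^{-1}][\Phi_{\mathbb{N}}^{-1}]=\mathbb{Z}[q,q^{-1}].$$
   Context: $q$ is an indeterminate, $\Phi_n(q)$ the $n$th cyclotomic polynomial, and $\Phi_{\mathbb{N}}^*$ the multiplicative subset of $\mathbb{Z}[q]$ generated by all $\Phi_n(q)$, $n\in\mathbb{N}$. $\mathbb{Z}[q]^{\mathbb{N}}=\varprojlim_{f\in\Phi_{\mathbb{N}}^*}\mathbb{Z}[q]/(f)$; it is an integral domain in which $q$ is invertible, and the natural map $\mathbb{Z}[q,q^{-1}]\to\mathbb{Z}[q]^{\mathbb{N}}$ is injective, so $\mathbb{Q}(q)\subset Q(\mathbb{Z}[q]^{\mathbb{N}})$, where $Q(\cdot)$ denotes the quotient field. $\mathbb{Z}[q,q^{-1}][\Phi_{\mathbb{N}}^{-1}]$ is the subring of $\mathbb{Q}(q)$ of fractions $f/g$ with $f\in\mathbb{Z}[q,q^{-1}]$, $g\in\Phi_{\mathbb{N}}^*$. *)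

From mathcomp Require Import all_boot all_order all_algebra all_field.
Set Implicit Arguments. Unset Strict Implicit. Unset Printing Implicit Defensive.
Import GRing.Theory.
Local Open Scope ring_scope.

(* Divisibility in Z[q] (genuine, not pseudo-divisibility). *)
Definition zdvd (f a : {poly int}) : Prop := exists r : {poly int}, a = r * f.

Definition zcong (f a b : {poly int}) : Prop := zdvd f (a - b).

Definition inPhiStar (f : {poly int}) : Prop :=
  exists s : seq nat, all (fun n => (0 < n)%N) s /\ f = \prod_(n <- s) 'Phi_n.

(* An element of Z[q]^N = lim_{f in Phi_N^*} Z[q]/(f) is represented by a
   compatible family x : f |-> x f (a representative of its component in
   Z[q]/(f)); two families represent the same element iff they agree
   modulo every f in Phi_N^*. *)
Definition compatible (x : {poly int} -> {poly int}) : Prop :=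
  forall f g, inPhiStar f -> inPhiStar g -> zdvd g f -> zcong g (x f) (x g).

Definition ZqN_eq (x y : {poly int} -> {poly int}) : Prop :=
  forall f, inPhiStar f -> zcong f (x f) (y f).

(* The Laurent polynomial p * q^{-k} in Z[q,q^{-1}], seen in Z[q]^N:
   x equals its image iff q^k * x = p in every Z[q]/(f)
   (q is a unit in each Z[q]/(f), f in Phi_N^* ). *)
Definition is_laurent_image (x : {poly int} -> {poly int}) (p : {poly int}) (k : nat) : Prop :=
  forall f, inPhiStar f -> zcong f ('X ^+ k * x f) p.

Definition ZqN_scale (g : {poly int}) (x : {poly int} -> {poly int}) :=
  fun f => g * x f.

From mathcomp Require Import all_boot all_order all_algebra all_field.
Local Open Scope ring_scope.
Import GRing.Theory.
Set Implicit Arguments. Unset Strict Implicit.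

(* Writing p q^-k = g x in Z[q]^N, the component at g itself shows that g
   divides p in Z[q], say p = p' g.  At the component f g, the congruence
   g (q^k x(f g)) = g p' mod f g can be cancelled by g (Z[q] is a domain), so
   q^k x(f g) = p' mod f, and compatibility gives x(f g) = x(f) mod f.  Hence x
   is the image of the Laurent polynomial p' q^-k. *)

Lemma zdvdD f a b : zdvd f a -> zdvd f b -> zdvd f (a + b).
Proof. by move=> [r ->] [s ->]; exists (r + s); rewrite mulrDl. Qed.

Lemma zdvdN f a : zdvd f a -> zdvd f (- a).
Proof. by move=> [r ->]; exists (- r); rewrite mulNr. Qed.

Lemma zdvd_mull f c a : zdvd f a -> zdvd f (c * a).
Proof. by move=> [r ->]; exists (c * r); rewrite mulrA. Qed.

Lemma zdvd_mulr f c : zdvd f (c * f).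
Proof. by exists c. Qed.

Lemma zcong_sym f a b : zcong f a b -> zcong f b a.
Proof. by move/zdvdN; rewrite opprB. Qed.

Lemma zcong_trans f a b c : zcong f a b -> zcong f b c -> zcong f a c.
Proof. by move=> Hab /(zdvdD Hab); rewrite addrA subrK. Qed.

Lemma zcong_mul2l f c a b : zcong f a b -> zcong f (c * a) (c * b).
Proof. by move/(zdvd_mull c); rewrite /zcong mulrBr. Qed.

Lemma zcong_zdvd f a b : zcong f a b -> zdvd f a -> zdvd f b.
Proof. by move=> /zdvdN Hab /(zdvdD Hab); rewrite opprB subrK. Qed.

Lemma zcong_mulI f g a b :
  g != 0 -> zcong (f * g) (g * a) (g * b) -> zcong f a b.
Proof.
move=> g_neq0 [r E]; exists r; apply: (mulIf g_neq0).
by rewrite mulrBl -mulrA -E ![_ * g]mulrC.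
Qed.

Lemma inPhiStarM f g : inPhiStar f -> inPhiStar g -> inPhiStar (f * g).
Proof.
move=> [s [Hs ->]] [t [Ht ->]]; exists (s ++ t).
by rewrite all_cat Hs Ht big_cat.
Qed.

Lemma inPhiStar_neq0 g : inPhiStar g -> g != 0.
Proof.
move=> [s [_ ->]]; apply/monic_neq0/monic_prod => n _.
exact: Cyclotomic_monic.
Qed.

Theorem proposition7p5 :
  forall (x : {poly int} -> {poly int}), compatible x ->
  forall (p g : {poly int}) (k : nat), inPhiStar g ->
    is_laurent_image (ZqN_scale g x) p k ->
  exists (p' : {poly int}) (k' : nat), is_laurent_image x p' k'.
Proof.
move=> x x_compat p g k Phi_g gx_eq.
have [p' def_p] : zdvd g p.
  apply: zcong_zdvd (gx_eq g Phi_g) _.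
  by rewrite /ZqN_scale mulrCA mulrC; apply: zdvd_mulr.
exists p', k => f Phi_f.
have Phi_fg := inPhiStarM Phi_f Phi_g.
have xfg_eq : zcong f ('X ^+ k * x (f * g)) p'.
  apply: (zcong_mulI (inPhiStar_neq0 Phi_g)).
  by rewrite mulrCA [g * p']mulrC -def_p; apply: gx_eq.
have xfg_xf : zcong f (x (f * g)) (x f) 
  by apply: x_compat => //; rewrite mulrC; apply: zdvd_mulr.
exact: zcong_trans (zcong_sym (zcong_mul2l _ xfg_xf)) xfg_eq.
Qed.
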